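(* Consider the general LPP model described in the context, fix $\eta_0\in(0,\infty)$, $u\in\mathbb{R}$, set $\eta=\eta_0+ut^{-2/3}$, and suppose Assumptions A2 and A3 hold. Let $D$ be a probability distribution. If, as $t\to\infty$, $$\frac{\tilde L_{\mathcal{L}^-\to(\eta t,t)}-\mu t}{t^{1/3}}-\frac{\tilde L_{\mathcal{L}^+\to E^+}-\mu t+\mu_0t^\nu}{t^{1/3}}\Rightarrow D,$$ then also $$\frac{\tilde L_{\mathcal{L}^-\to(\eta t,t)}-\mu t}{t^{1/3}}-\frac{\tilde L_{\mathcal{L}^+\to E^+}+L_{E^+\to(\eta t,t)}-\mu t}{t^{1/3}}\Rightarrow D.$$
   Context: LPP: for independent nonnegative $\{\omega_{i,j}\}$, an up-right path is a sequence of points of $\mathbb{Z}^2$ with increments in $\{(1,0),(0,1)\}$; $L_{S_A\to S_E}=\max_\pi\sum_{(i,j)\in\pi\setminus S_A}\omega_{i,j}$ over up-right paths from $S_A$ to $S_E$ ($-\infty$ if none); $\pi^{\max}_{L_{A\to B}}$ is the a.s. unique maximizing path; non-integer coordinates are understood as integer parts. General model: integers $x_k(0)$, $k\in\mathbb{Z}$, with $x_{k+1}(0)<x_k(0)$, $x_0(0)=1$, $x_1(0)<-1$; $\omega_{i,j}$ independent exponential with rate $v_j>0$; $\mathcal{L}^+=\{(k+x_k(0),k):k>0\}$, $\mathcal{L}^-=\{(k+x_k(0),k):k\le0\}$. Let $\mu\in\mathbb{R}$ and $G_1(\cdot;u)$ be a continuous distribution function. Assumption A2: there exist $\kappa,\mu_0\in\mathbb{R}$,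 $\nu\in(1/3,1)$ and a continuous distribution function $G_0(\cdot;u)$ such that, with $E^+=(\eta t-\kappa t^\nu,t-t^\nu)$, for all $s$: $\lim_{t\to\infty}\mathbb{P}((L_{E^+\to(\eta t,t)}-\mu_0t^\nu)/t^{\nu/3}\le s)=G_0(s;u)$ and $\lim_{t\to\infty}\mathbb{P}((L_{\mathcal{L}^+\to E^+}-\mu t+\mu_0t^\nu)/t^{1/3}\le s)=G_1(s;u)$. Assumption A3: for some $\beta\in(0,\nu)$, with $D_\gamma=(\lfloor\gamma\eta t\rfloor,\lfloor\gamma t\rfloor)$: $\lim_{t\to\infty}\mathbb{P}(\bigcup_{\gamma\in[0,1-t^{\beta-1}]}\{D_\gamma\in\pi^{\max}_{L_{\mathcal{L}^+\to E^+}}\})=0$ and $\lim_{t\to\infty}\mathbb{P}(\bigcup_{\gamma\in[0,1-t^{\beta-1}]}\{D_\gamma\in\pi^{\max}_{L_{\mathcal{L}^-\to(\eta t,t)}}\})=0$. $\tilde L_{B\to C}$ is defined like $L_{B\to C}$ but maximizing only over up-right paths containing none of the points $D_\gamma$, $\gamma\in[0,1-t^{\beta-1}]$. ''$\Rightarrow$'' denotes convergence in distribution. *)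

From HB Require Import structures.
From mathcomp Require Import all_boot all_order all_algebra.
From mathcomp Require Import all_classical all_reals all_analysis.
Set Implicit Arguments. Unset Strict Implicit. Unset Printing Implicit Defensive.
Import Order.TTheory GRing.Theory Num.Theory.
Import numFieldNormedType.Exports.
Local Open Scope classical_set_scope.
Local Open Scope ring_scope.

Section LPP.
Variable R : realType.

Definition pt := (int * int)%type.

Definition upstep (p q : pt) : bool :=
  (q == (p.1 + 1, p.2)%R) || (q == (p.1, p.2 + 1)%R).

Definition upright (s : seq pt) : bool := (s != [::]) && sorted upstep s.

Definition path_from_to (SA SE : set pt) (s : seq pt) : Prop :=
  upright s /\ SA (head (0, 0)%R s) /\ SE (last (0, 0)%R s).

Definition path_weight (w : pt -> R) (SA : set pt) (s : seq pt) : R :=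
  \sum_(q <- s | q \notin SA) w q.

(** Restricted LPP: sup over up-right paths from SA to SE avoiding Forb
    (-oo if there is no such path). *)
Definition LPPr (w : pt -> R) (Forb SA SE : set pt) : \bar R :=
  ereal_sup [set (path_weight w SA s)%:E | s in
     [set s | path_from_to SA SE s /\ (forall q, q \in s -> ~ Forb q)]].

Definition LPP (w : pt -> R) (SA SE : set pt) : \bar R := LPPr w set0 SA SE.

Definition maxpath_hits (w : pt -> R) (SA SE Dset : set pt) : Prop :=
  exists s, path_from_to SA SE s /\ (path_weight w SA s)%:E = LPP w SA SE /\
            exists q, q \in s /\ Dset q.

(** Point with (possibly) non-integer coordinates: integer parts. *)
Definition ipt (a b : R) : pt := (Num.floor a, Num.floor b).

End LPP.

Section Prob.
Context {d : measure_display} {T : measurableType d} {R : realType}.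
Variable P : probability T R.
Local Open Scope ereal_scope.

Definition mutually_independent {I : eqType} (X : I -> T -> R) : Prop :=
  (forall i, measurable_fun setT (X i)) /\
  forall (s : seq I) (B : I -> set R), uniq s -> (forall i, measurable (B i)) ->
    P [set w | forall i, i \in s -> B i (X i w)] =
    \prod_(i <- s) P (X i @^-1` B i).

Definition exponential_law (v : R) (X : T -> R) : Prop :=
  forall r : R, P [set w | (X w <= r)%R] =
    (if (r < 0)%R then 0%R else (1 - expR (- (v * r))))%R%:E.

Definition cvg_distr (X : R -> T -> \bar R) (D : probability R R) : Prop :=
  forall s : R, {for s, continuous (fun x : R => fine (D `]-oo, x]%classic))} ->
    fine (P [set w | X t w <= s%:E]) @[t --> +oo%R] -->
      fine (D `]-oo, s]%classic).

End Prob.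

Definition cont_distr_fun {R : realType} (G : R -> R) : Prop :=
  {homo G : x y / (x <= y)%R} /\ continuous G /\
  G x @[x --> -oo%R] --> (0 : R) /\ G x @[x --> +oo%R] --> (1 : R).

Section Geometry.
Variable R : realType.
Local Open Scope ring_scope.

Definition wt {T : Type} (om : pt -> T -> R) (w : T) : pt -> R := fun p => om p w.

Definition eta_t (eta0 u t : R) : R := eta0 + u * t `^ (- (2 / 3)).

Definition target (eta0 u t : R) : pt := ipt (eta_t eta0 u t * t) t.

Definition Eplus (eta0 u kappa nu t : R) : pt :=
  ipt (eta_t eta0 u t * t - kappa * t `^ nu) (t - t `^ nu).

Definition Dset (eta0 u beta t : R) : set pt :=
  [set ipt (g * eta_t eta0 u t * t) (g * t) | g in `[0, 1 - t `^ (beta - 1)]%classic].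

Definition Lplus (x0 : int -> int) : set pt :=
  [set p | exists k : int, 0 < k /\ p = (k + x0 k, k)].
Definition Lminus (x0 : int -> int) : set pt :=
  [set p | exists k : int, k <= 0 /\ p = (k + x0 k, k)].
End Geometry.

(* The two centred quantities differ by t^((nu - 1) / 3) * Z_t, where
   Z_t = (L_{E+ -> (eta t, t)} - mu0 t^nu) / t^(nu / 3) converges in law by
   Assumption A2 and is therefore tight.  As t^((nu - 1) / 3) -> 0, the
   difference tends to 0 in probability, and Slutsky's argument transfers the
   limit law D: at a continuity point s of D one sandwiches between continuity
   points s2 < s < s1 close to s, which exist because a monotone function has
   only countably many discontinuities. *)

From mathcomp Require Import all_boot all_order all_algebra.
From mathcomp Require Import all_classical all_reals all_analysis.
From mathcomp Require Import measurable_realfun.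
From mathcomp Require Import ring lra.
Import Order.TTheory GRing.Theory Num.Theory.
Import numFieldNormedType.Exports.
Local Open Scope classical_set_scope.
Local Open Scope ring_scope.

Section nondecreasing_continuity.
Context {R : realType} (F : R -> R).
Hypothesis ndF : {homo F : x y / x <= y}.

Lemma nondecreasing_continuous_at x : ~ discontinuity F x -> {for x, continuous F}.
Proof.
move=> nd.
have cl : cvg (F y @[y --> x^'-]).
  apply: nondecreasing_at_left_is_cvgr; first by apply: nearW => z p q _ _; exact: ndF.
  near=> z; exists (F x) => _ [y /= + <-]; rewrite in_itv/= => /andP[_ /ltW]; exact: ndF.
have cr : cvg (F y @[y --> x^'+]).
  apply: nondecreasing_at_right_is_cvgr; first by apply: nearW => z p q _ _; exact: ndF.
  near=> z; exists (F x) => _ [y /= + <-]; rewrite in_itv/= => /andP[/ltW + _]; exact: ndF.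
have lr : lim (F y @[y --> x^'-]) = lim (F y @[y --> x^'+]).
  by apply/eqP; apply/negPn/negP => ne; apply: nd.
have l_le : lim (F y @[y --> x^'-]) <= F x.
  apply: limr_le => //; near=> y; apply: ndF; apply/ltW; near: y; exact: nbhs_left_lt.
have r_ge : F x <= lim (F y @[y --> x^'+]).
  apply: limr_ge => //; near=> y; apply: ndF; apply/ltW; near: y; exact: nbhs_right_gt.
have lE : lim (F y @[y --> x^'-]) = F x by apply/le_anti; rewrite l_le lr r_ge.
apply/left_right_continuousP; split; first by move: cl; rewrite lE.
by move: cr; rewrite -lr lE.
Unshelve. all: by end_near. Qed.

(* The discontinuities of [F] in [`]a, b[] are countable, and that interval is not. *)
Lemma nondecreasing_continuity_point_in a b :
  a < b -> exists2 x, a < x < b & {for x, continuous F}.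
Proof.
move=> ab; apply/not_exists2P => noncont.
have : countable `]a, b[%classic.
  apply: sub_countable (@discontinuity_countable R a b F (fun p q _ _ => @ndF p q)).
  apply/subset_card_le => y /= yab; split => //.
  apply: contrapT => nd; case: (noncont y); apply.
    by move: yab; rewrite in_itv.
  exact: nondecreasing_continuous_at.
move/countable_lebesgue_measure0; rewrite lebesgue_measure_itv/= lte_fin ab.
by move=> /eqP; rewrite -EFinD eqe subr_eq0 => /eqP ba; move: ab; rewrite ba ltxx.
Qed.

Lemma continuity_points_around s e : {for s, continuous F} -> 0 < e ->
  exists s1 s2, [/\ s2 < s < s1, {for s1, continuous F}, {for s2, continuous F},
                    `|F s - F s1| < e & `|F s - F s2| < e].
Proof.
move=> /cvgrPdist_lt /[apply] /nbhs_normP [r r0 near_s].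
have [s1 /andP[ss1 s1s] cs1] := @nondecreasing_continuity_point_in s (s + r)
  ltac:(by rewrite ltrDl).
have [s2 /andP[s2s ss2] cs2] := @nondecreasing_continuity_point_in (s - r) s
  ltac:(by rewrite ltrBlDr ltrDl).
exists s1, s2; split => //; first by rewrite ss2 ss1.
- by apply: near_s; rewrite /ball_ /= distrC gtr0_norm; lra.
- by apply: near_s; rewrite /ball_ /= gtr0_norm; lra.
Qed.

End nondecreasing_continuity.

Lemma powRN_cvg0 {R : realType} (a : R) : 0 < a -> t `^ (- a) @[t --> +oo] --> 0.
Proof.
move=> a0; apply: (@cvg_trans _ (expR (- (a * ln t)) @[t --> +oo])).
  apply: near_eq_cvg; near=> t.
  have t0 : 0 < t by near: t; apply: nbhs_pinfty_gt; exact: num_real.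
  by rewrite /powR gt_eqF// mulNr.
apply: (cvg_comp (fun t => a * ln t) (fun x => expR (- x)) _ (@cvgr_expR R)).
apply/cvgryPge => A; near=> t.
have t0 : 0 < t by near: t; apply: nbhs_pinfty_gt; exact: num_real.
rewrite -ler_pdivrMl// -ler_expR lnK; last by rewrite posrE.
near: t; apply: nbhs_pinfty_ge; exact: num_real.
Unshelve. all: by end_near. Qed.

Section probability_bounds.
Context {d : measure_display} {T : measurableType d} {R : realType}.
Variable P : probability T R.

Lemma measurable_lee_cst (f : T -> \bar R) (s : R) :
  measurable_fun setT f -> measurable [set w | (f w <= s%:E)%E].
Proof.
move=> mf; have := @measurable_lee _ T R setT measurableT f (fun=> s%:E) mf (measurable_cst _).
by rewrite setTI.
Qed.

Lemma fine_le_measure (A B : set T) :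
  measurable A -> measurable B -> A `<=` B -> fine (P A) <= fine (P B).
Proof.
move=> mA mB AB; apply: fine_le; rewrite ?fin_num_measure//.
by apply: le_measure => //; rewrite inE.
Qed.

Lemma fine_le_measureU2 {A B C : set T} : measurable A -> measurable B ->
  measurable C -> A `<=` B `|` C -> fine (P A) <= fine (P B) + fine (P C).
Proof.
move=> mA mB mC ABC; rewrite -fineD ?fin_num_measure//.
apply: fine_le; rewrite ?fin_numD ?fin_num_measure//.
apply: le_trans (measureU2 _ mB mC).
by apply: le_measure => //; rewrite inE//; exact: measurableU.
Qed.

Lemma fine_probability_setC (A : set T) :
  measurable A -> fine (P (~` A)) = 1 - fine (P A).
Proof. by move=> mA; rewrite probability_setC// fineB ?fin_num_measure. Qed.

End probability_bounds.

Definition cdf {R : realType} (D : probability R R) (x : R) : R :=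
  fine (D `]-oo, x]%classic).

Lemma cdf_nondecreasing {R : realType} (D : probability R R) :
  {homo cdf D : x y / x <= y}.
Proof.
move=> x y xy; apply: fine_le_measure => // z /=.
by rewrite !in_itv/= => /le_trans; apply.
Qed.

Section ereal_perturbation.
Context {R : realType}.
Local Open Scope ereal_scope.

Lemma lee_subEFin_addnorm (y : \bar R) (r s : R) :
  y - r%:E <= s%:E -> y <= (s + `|r|)%:E.
Proof.
case: y => [y| |]//=; rewrite ?leNye// -EFinD !lee_fin => ys.
by have := ler_norm r; lra.
Qed.

Lemma lee_subnorm_subEFin (y : \bar R) (r s : R) :
  y <= (s - `|r|)%:E -> y - r%:E <= s%:E.
Proof.
case: y => [y| |]//=; rewrite ?leNye// -EFinD !lee_fin => ys.
by have := ler_norm (- r); rewrite normrN; lra.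
Qed.

Lemma lee_between_EFin (x : \bar R) (M : R) :
  ~ x <= (- M)%:E -> x <= M%:E -> exists2 z : R, x = z%:E & (`|z| <= M)%R.
Proof.
case: x => [z| |] /=; [|by rewrite leye_eq|by rewrite leNye].
rewrite !lee_fin => /negP; rewrite -ltNge => Mz zM.
by exists z => //; rewrite ler_norml zM andbT ltW.
Qed.

End ereal_perturbation.

Section slutsky.
Context {d : measure_display} {T : measurableType d} {R : realType}.
Variable P : probability T R.

(* [X t - Y t] tends to [0] in probability, phrased through measurable
   exceptional sets since the event [`|X t - Y t| < eps] need not be measurable
   for extended-real valued [X t] and [Y t]. *)
Definition close_in_probability (X Y : R -> T -> \bar R) : Prop :=
  forall eps delta : R, 0 < eps -> 0 < delta ->
  \forall t \near +oo%R, exists2 B : set T, measurable B /\ fine (P B) < delta &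
    forall w, ~ B w -> exists2 r : R, (X t w = Y t w - r%:E)%E & `|r| < eps.

Lemma cvg_distr_close (X Y : R -> T -> \bar R) (D : probability R R) :
  (forall t, measurable_fun setT (X t)) -> (forall t, measurable_fun setT (Y t)) ->
  close_in_probability X Y -> cvg_distr P Y D -> cvg_distr P X D.
Proof.
move=> mX mY XY YD s Ds.
pose FX t x := fine (P [set w | (X t w <= x%:E)%E]).
pose FY t x := fine (P [set w | (Y t w <= x%:E)%E]).
change (FX t s @[t --> +oo] --> cdf D s); apply/cvgrPdist_lt => e e0.
have e4 : 0 < e / 4 by rewrite divr_gt0.
have [s1 [s2 [/andP[s2s ss1] Ds1 Ds2 Fs1 Fs2]]] :=
  @continuity_points_around _ (cdf D) (cdf_nondecreasing D) s _ Ds e4.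
pose eps := Num.min (s1 - s) (s - s2).
have eps0 : 0 < eps by rewrite lt_min !subr_gt0 ss1 s2s.
have [eps1 eps2] : eps <= s1 - s /\ eps <= s - s2 by rewrite !ge_min !lexx orbT.
have /cvgrPdist_lt /(_ _ e4) Y1 : FY t s1 @[t --> +oo] --> cdf D s1 := YD s1 Ds1.
have /cvgrPdist_lt /(_ _ e4) Y2 : FY t s2 @[t --> +oo] --> cdf D s2 := YD s2 Ds2.
near=> t.
have [B [mB PB] XYt] : exists2 B : set T, measurable B /\ fine (P B) < e / 4 &
    forall w, ~ B w -> exists2 r : R, (X t w = Y t w - r%:E)%E & `|r| < eps.
  by near: t; exact: XY.
have upper : FX t s <= FY t s1 + fine (P B).
  apply: fine_le_measureU2 => //; try exact: measurable_lee_cst.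
  move=> w /= Xw; have [Bw|nBw] := pselect (B w); [by right | left].
  have [r XYw /ltW r_eps] := XYt w nBw; move: Xw; rewrite XYw => /lee_subEFin_addnorm.
  by move/le_trans; apply; rewrite lee_fin; lra.
have lower : FY t s2 <= FX t s + fine (P B).
  apply: fine_le_measureU2 => //; try exact: measurable_lee_cst.
  move=> w /= Yw; have [Bw|nBw] := pselect (B w); [by right | left].
  have [r XYw /ltW r_eps] := XYt w nBw; rewrite /= XYw.
  by apply: lee_subnorm_subEFin; apply: le_trans Yw _; rewrite lee_fin; lra.
have PB0 : 0 <= fine (P B) by rewrite fine_ge0.
have Y1t : `|cdf D s1 - FY t s1| < e / 4 by near: t.
have Y2t : `|cdf D s2 - FY t s2| < e / 4 by near: t.
move: Fs1 Fs2 Y1t Y2t; rewrite !ltr_distlC.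
by move=> /andP[? ?] /andP[? ?] /andP[? ?] /andP[? ?]; apply/andP; split; lra.
Unshelve. all: by end_near. Qed.

(* Convergence in law of [Z t] to a proper distribution function [G] makes
   [Z t] tight, which is what kills the vanishing factor [rho t]. *)
Lemma close_in_probability_scaled_tight (X Y Z : R -> T -> \bar R) (rho G : R -> R) :
  (forall t, measurable_fun setT (Z t)) ->
  G x @[x --> -oo] --> (0 : R) -> G x @[x --> +oo] --> (1 : R) ->
  (forall x, fine (P [set w | (Z t w <= x%:E)%E]) @[t --> +oo] --> G x) ->
  rho t @[t --> +oo] --> (0 : R) ->
  (\forall t \near +oo, forall w z, Z t w = z%:E ->
     X t w = (Y t w - (rho t * z)%:E)%E) ->
  close_in_probability X Y.
Proof.
move=> mZ G0 G1 ZG rho0 XYZ eps delta eps0 delta0.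
pose FZ t x := fine (P [set w | (Z t w <= x%:E)%E]).
have d4 : 0 < delta / 4 by rewrite divr_gt0.
have [M [M0 GlM GuM]] : exists M, [/\ 0 < M, G (- M) < delta / 4 & 1 - delta / 4 < G M].
  suff : \forall M \near +oo, [/\ 0 < M, G (- M) < delta / 4 & 1 - delta / 4 < G M].
    exact: filter_ex.
  near=> M; split.
  - by near: M; apply: nbhs_pinfty_gt; exact: num_real.
  - near: M; have /cvgNy_compNP /cvgrPdist_lt /(_ _ d4) := G0.
    by apply: filterS => M /=; rewrite sub0r normrN; apply: le_lt_trans; exact: ler_norm.
  - near: M; have /cvgrPdist_lt /(_ _ d4) := G1.
    by apply: filterS => M; rewrite ltr_distlC => /andP[].
have /cvgrPdist_lt /(_ _ d4) Zl : FZ t (- M) @[t --> +oo] --> G (- M) := ZG (- M).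
have /cvgrPdist_lt /(_ _ d4) Zu : FZ t M @[t --> +oo] --> G M := ZG M.
have /cvgrPdist_lt /(_ (eps / M) (divr_gt0 eps0 M0)) rho_small := rho0.
near=> t.
have rho_t : `|rho t| < eps / M by rewrite -[rho t]opprK normrN -sub0r; near: t.
have Zl_t : `|G (- M) - FZ t (- M)| < delta / 4 by near: t.
have Zu_t : `|G M - FZ t M| < delta / 4 by near: t.
pose B := [set w | (Z t w <= (- M)%:E)%E] `|` ~` [set w | (Z t w <= M%:E)%E].
have mlo : measurable [set w | (Z t w <= (- M)%:E)%E] by exact: measurable_lee_cst.
have mup : measurable [set w | (Z t w <= M%:E)%E] by exact: measurable_lee_cst.
have mB : measurable B by exact/measurableU/measurableC.
exists B; first split => //.
- have := fine_le_measureU2 P mB mlo (measurableC mup) (fun _ => id).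
  rewrite fine_probability_setC// -/(FZ t (- M)) -/(FZ t M).
  by move: Zl_t Zu_t; rewrite !ltr_distlC => /andP[? ?] /andP[? ?]; lra.
- move=> w /not_orP[/lee_between_EFin + /contrapT] => /[apply] -[z Zz zM].
  exists (rho t * z); first by apply: (near XYZ t).
  rewrite normrM; apply: le_lt_trans (ler_wpM2l (normr_ge0 _) zM) _.
  by rewrite -ltr_pdivlMr.
Unshelve. all: by end_near. Qed.

End slutsky.

Section LPP_measurability.
Context {R : realType} {d : measure_display} {Omega : measurableType d}.
Variable om : pt -> Omega -> R.
Hypothesis mom : forall p, measurable_fun setT (om p).

Lemma measurable_path_weight SA s :
  measurable_fun setT (fun w => path_weight (wt om w) SA s).
Proof.
rewrite /path_weight; under eq_fun do rewrite big_mkcond.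
by apply: measurable_sum => q; case: (q \notin SA) => //=; exact: mom.
Qed.

(* Paths form a countable type, so [LPPr] is a countable supremum of
   measurable functions. *)
Lemma measurable_LPPr Forb SA SE :
  measurable_fun setT (fun w => LPPr (wt om w) Forb SA SE).
Proof.
pose S := [set s | path_from_to SA SE s /\ (forall q, q \in s -> ~ Forb q)].
pose g (n : nat) (w : Omega) : \bar R :=
  if @unpickle (seq pt) n is Some s then
    (if `[< S s >] then (path_weight (wt om w) SA s)%:E else -oo)%E
  else -oo%E.
have mg n : measurable_fun setT (g n).
  rewrite /g; case: (unpickle n) => [s|]; last exact: measurable_cst.
  case: `[< S s >]; last exact: measurable_cst.
  by apply/measurable_EFinP; exact: measurable_path_weight.
suff -> : (fun w => LPPr (wt om w) Forb SA SE) = (fun w => esups (g ^~ w) 0%N).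
  exact: measurable_fun_esups.
apply/funext => w; apply/le_anti/andP; split.
  apply: ge_ereal_sup => _ [s Ss <-]; apply: ereal_sup_ubound.
  by exists (pickle s) => //; rewrite /g pickleK; case: asboolP.
apply: ge_ereal_sup => _ [n _ <-]; rewrite /g.
case: (unpickle n) => [s|]; last by rewrite leNye.
case: asboolP => [Ss|_]; last by rewrite leNye.
by apply: ereal_sup_ubound; exists s.
Qed.

End LPP_measurability.

(* Substituting [cc = k + z / c0] isolates the rescaled middle term. *)
Lemma sub_rescaled_termE {R : realType} (a b cc : \bar R) (m k c c0 z : R) :
  0 < c -> 0 < c0 -> ((cc - k%:E) * c0%:E = z%:E)%E ->
  ((a - m%:E) * c%:E - (b + cc - m%:E) * c%:E =
   (a - m%:E) * c%:E - (b - m%:E + k%:E) * c%:E - (c / c0 * z)%:E)%E.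
Proof.
move=> c_gt0 c0_gt0 ccE.
have -> : cc = (z / c0 + k)%:E.
  move: ccE; case: cc => [x| |] /=.
  - by move=> [<-]; congr EFin; field; exact: lt0r_neq0.
  - by rewrite gt0_mulye ?lte_fin.
  - by rewrite gt0_mulNye ?lte_fin.
case: a => [a| |]; case: b => [b| |] //=;
  try by rewrite ?gt0_mulye ?gt0_mulNye ?lte_fin.
by rewrite -EFinD -EFinM -!EFinD; congr EFin; field; exact: lt0r_neq0.
Qed.

Theorem proposition2p8
  (R : realType) (d : measure_display) (Omega : measurableType d)
  (P : probability Omega R)
  (x0 : int -> int) (v : int -> R) (om : pt -> Omega -> R)
  (eta0 u mu : R) (G1 : R -> R)
  (kappa mu0 nu : R) (G0 : R -> R) (beta : R)
  (D : probability R R) :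
  (* the general model *)
  (forall k, x0 (k + 1) < x0 k) -> x0 0 = 1 -> x0 1 < -1 ->
  (forall j, 0 < v j) ->
  mutually_independent P om ->
  (forall p : pt, exponential_law P (v p.2) (om p)) ->
  0 < eta0 -> cont_distr_fun G1 ->
  (* Assumption A2 *)
  1 / 3 < nu < 1 -> cont_distr_fun G0 ->
  (forall s : R,
     fine (P [set w | ((LPP (wt om w) [set Eplus eta0 u kappa nu t]
                          [set target eta0 u t] - (mu0 * t `^ nu)%:E)
                       * ((t `^ (nu / 3))^-1)%:E <= s%:E)%E])
       @[t --> +oo] --> G0 s) ->
  (forall s : R,
     fine (P [set w | ((LPP (wt om w) (Lplus x0) [set Eplus eta0 u kappa nu t]
                          - (mu * t)%:E + (mu0 * t `^ nu)%:E)
                       * ((t `^ (1 / 3))^-1)%:E <= s%:E)%E])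
       @[t --> +oo] --> G1 s) ->
  (* Assumption A3 *)
  0 < beta < nu ->
  fine (P [set w | maxpath_hits (wt om w) (Lplus x0) [set Eplus eta0 u kappa nu t]
                     (Dset eta0 u beta t)]) @[t --> +oo] --> (0 : R) ->
  fine (P [set w | maxpath_hits (wt om w) (Lminus x0) [set target eta0 u t]
                     (Dset eta0 u beta t)]) @[t --> +oo] --> (0 : R) ->
  (* convergence hypothesis and conclusion *)
  cvg_distr P (fun t w =>
      ((LPPr (wt om w) (Dset eta0 u beta t) (Lminus x0) [set target eta0 u t]
          - (mu * t)%:E) * ((t `^ (1 / 3))^-1)%:E
     - (LPPr (wt om w) (Dset eta0 u beta t) (Lplus x0) [set Eplus eta0 u kappa nu t]
          - (mu * t)%:E + (mu0 * t `^ nu)%:E) * ((t `^ (1 / 3))^-1)%:E)%E) D ->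
  cvg_distr P (fun t w =>
      ((LPPr (wt om w) (Dset eta0 u beta t) (Lminus x0) [set target eta0 u t]
          - (mu * t)%:E) * ((t `^ (1 / 3))^-1)%:E
     - (LPPr (wt om w) (Dset eta0 u beta t) (Lplus x0) [set Eplus eta0 u kappa nu t]
          + LPP (wt om w) [set Eplus eta0 u kappa nu t] [set target eta0 u t]
          - (mu * t)%:E) * ((t `^ (1 / 3))^-1)%:E)%E) D.
Proof.
move=> _ _ _ _ [mom _] _ _ _ /andP[_ nu_lt1] [_ [_ [G0Ny G0y]]] Z_cvg _ _ _ _ hyp.
have mL := measurable_LPPr _ mom.
move: hyp; apply: cvg_distr_close => [t|t|];
  try by do ![apply: emeasurable_funB | apply: emeasurable_funD
            | apply: emeasurable_funM | exact: mL | exact: measurable_cst].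
pose c (t : R) := (t `^ (1 / 3))^-1; pose c0 (t : R) := (t `^ (nu / 3))^-1.
pose Z t w := ((LPP (wt om w) [set Eplus eta0 u kappa nu t] [set target eta0 u t]
                - (mu0 * t `^ nu)%:E) * (c0 t)%:E)%E.
apply: (close_in_probability_scaled_tight P _ _ Z (fun t => c t / c0 t) G0) => //.
- by move=> t; do ![apply: emeasurable_funB | apply: emeasurable_funM
                   | exact: mL | exact: measurable_cst].
- have a_gt0 : 0 < 1 / 3 - nu / 3 by lra.
  apply: (@cvg_trans _ (t `^ (- (1 / 3 - nu / 3)) @[t --> +oo])); last exact: powRN_cvg0.
  apply: near_eq_cvg; near=> t.
  have t_gt0 : 0 < t by near: t; apply: nbhs_pinfty_gt; exact: num_real.
  rewrite /c /c0 invrK [RHS]mulrC -powRB ?(gt_eqF t_gt0) ?implybT//.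
  by congr (_ `^ _); lra.
- near=> t => w z Zz.
  have t_gt0 : 0 < t by near: t; apply: nbhs_pinfty_gt; exact: num_real.
  by apply: sub_rescaled_termE Zz; rewrite invr_gt0 powR_gt0.
Unshelve. all: by end_near. Qed.
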